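(* Let $(x^k)$ be generated by the augmented Lagrangian method described below, where each step satisfies the inexactness assumption described below with $\varepsilon_k\downarrow0$, and let $\bar x$ be a limit point of $(x^k)$. Assume that one of the following holds: (a) $\bar x$ is feasible for the GNEP and GNEP-CPLD holds in $\bar x$; (b) GNEP-EMFCQ holds in $\bar x$. Then $\bar x$ is a KKT point of the GNEP.
   Context: GNEP: $N$ players, variables $x=(x^1,\ldots,x^N)\in\mathbb{R}^n$, $x^\nu\in\mathbb{R}^{n_\nu}$. Player $\nu$ solves $\min_{x^\nu}\theta_\nu(x)$ s.t. $c^\nu(x):=(g^\nu(x),h^\nu(x))\le0$, with continuously differentiable $\theta_\nu:\mathbb{R}^n\to\mathbb{R}$, $g^\nu:\mathbb{R}^n\to\mathbb{R}^{m_\nu}$, $h^\nu:\mathbb{R}^n\to\mathbb{R}^{p_\nu}$ ($p_\nu=0$ allowed); $m=\sum m_\nu$, $p=\sum p_\nu$. Notation: $v_+=\max\{0,v\}$ componentwise; $\nabla f$ = transposed Jacobian, $\nabla_{x^\nu}f$ its rows for $x^\nu$; $\min$ componentwise; Euclidean norms. Vectors in $\mathbb{R}^m$ (resp. $\mathbb{R}^p$) are split into player blocks. KKT point of the GNEP: $x$ such that for every $\nu$ there are multipliers $\lambda^\nu\in\mathbb{R}^{m_\nu+p_\nu}$ with $\nabla_{x^\nu}\theta_\nu(x)+\nabla_{x^\nu}c^\nu(x)\lambda^\nu=0$ and $\min\{-c^\nu(x),\lambda^\nu\}=0$. Constraint qualifications (with respect to $c^\nu$): vectors are positively linearly dependent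 if a nontrivial nonnegative combination vanishes. CPLD$_\nu$ at $x$ with $c^\nu(x)\le0$: whenever $\nabla_{x^\nu}c_i^\nu(x)$, $i\in I$, are positively linearly dependent for some $I\subset\{i:c_i^\nu(x)=0\}$, the vectors $\nabla_{x^\nu}c_i^\nu(y)$, $i\in I$, are linearly dependent for all $y$ in a neighbourhood of $x$; GNEP-CPLD at $x$ means CPLD$_\nu$ at $x$ for all $\nu$. GNEP-EMFCQ at $x$: for every $\nu$ there is $d^\nu$ with $\nabla_{x^\nu}c_i^\nu(x)^Td^\nu<0$ for every $i$ with $c_i^\nu(x)\ge0$. Augmented Lagrangian of player $\nu$: $L_a^\nu(x,u;\rho)=\theta_\nu(x)+\frac{\rho}{2}\|(g^\nu(x)+u/\rho)_+\|^2$. Method: choose $x^0\in\mathbb{R}^n,\lambda^0\in\mathbb{R}^m,\mu^0\in\mathbb{R}^p$, an initial $u^0\in\mathbb{R}^m$, $u^{\max}\ge0$, and for each $\nu$: $\tau_\nu\in(0,1)$, $\gamma_\nu>1$, $\rho_{\nu,0}>0$. For $k=0,1,2,\dots$ (the method is assumed to run forever): (1) compute $(x^{k+1},\mu^{k+1})\in\mathbb{R}^{n+p}$ satisfying the inexactness assumption; (2) $\lambda^{\nu,k+1}=(u^{\nu,k}+\rho_{\nu,k}g^\nu(x^{k+1}))_+$; (3) for each $\nu$: if $\|\min\{-g^\nu(x^{k+1}),\lambda^{\nu,k+1}\}\|\le\tau_\nu\|\min\{-g^\nu(x^k),\lambda^{\nu,k}\}\|$ then $\rho_{\nu,k+1}=\rho_{\nu,k}$,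 else $\rho_{\nu,k+1}=\gamma_\nu\rho_{\nu,k}$; (4) $u^{k+1}=\min\{\lambda^{k+1},u^{\max}\}$ componentwise. Inexactness assumption: for all $k,\nu$, $\|\nabla_{x^\nu}L_a^\nu(x^{k+1},u^{\nu,k};\rho_{\nu,k})+\nabla_{x^\nu}h^\nu(x^{k+1})\mu^{\nu,k+1}\|\le\varepsilon_k$ and $\|\min\{-h^\nu(x^{k+1}),\mu^{\nu,k+1}\}\|\le\varepsilon_k'$, with $(\varepsilon_k)\subset[0,\infty)$ bounded and $\varepsilon'_k\to0$. *)

From HB Require Import structures.
From mathcomp Require Import all_boot all_order all_algebra.
From mathcomp Require Import all_classical all_reals.
From mathcomp Require Import topology normedtype sequences derive.
Set Implicit Arguments. Unset Strict Implicit. Unset Printing Implicit Defensive.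
Import Order.TTheory GRing.Theory Num.Theory.
Import numFieldNormedType.Exports.
Local Open Scope ring_scope.

(* Encoding of the GNEP:  the full variable x lives in 'rV[R]_n; the map
   blk : 'I_n -> 'I_N assigns every coordinate to its player, so that
   x^nu is the family of coordinates j with blk j = nu.  Likewise the
   constraints g : 'I_m -> ('rV_n -> R) are split into player blocks by
   gblk : 'I_m -> 'I_N, and h : 'I_p -> ('rV_n -> R) by hblk. *)

Section GNEP.
Variable R : realType.
Variable n : nat.

Definition evec (j : 'I_n) : 'rV[R]_n := delta_mx 0 j.

Definition partial (f : 'rV[R]_n -> R) (j : 'I_n) (x : 'rV[R]_n) : R :=
  derive f x (evec j).

Definition C1 (f : 'rV[R]_n -> R) : Prop :=
  (forall x, differentiable f x) /\ (forall j, continuous (partial f j)).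

Definition bnorm (I : finType) (P : pred I) (v : I -> R) : R :=
  Num.sqrt (\sum_(i | P i) v i ^+ 2).

Definition cfun (m p : nat) (g : 'I_m -> 'rV[R]_n -> R) (h : 'I_p -> 'rV[R]_n -> R)
  (i : 'I_m + 'I_p) : 'rV[R]_n -> R :=
  match i with inl i => g i | inr i => h i end.

Definition cblk (N m p : nat) (gblk : 'I_m -> 'I_N) (hblk : 'I_p -> 'I_N)
  (i : 'I_m + 'I_p) : 'I_N :=
  match i with inl i => gblk i | inr i => hblk i end.

Definition La (N m : nat) (theta : 'I_N -> 'rV[R]_n -> R)
  (g : 'I_m -> 'rV[R]_n -> R) (gblk : 'I_m -> 'I_N) (nu : 'I_N)
  (x : 'rV[R]_n) (u : 'I_m -> R) (rho : R) : R :=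
  theta nu x + rho / 2 *
    \sum_(i | gblk i == nu) (Num.max 0 (g i x + u i / rho)) ^+ 2.

Definition pos_lin_dep (N : nat) (blk : 'I_n -> 'I_N) (nu : 'I_N)
  (I : finType) (S : {set I}) (v : I -> 'I_n -> R) : Prop :=
  exists a : I -> R,
    (forall i, i \in S -> 0 <= a i) /\
    (exists2 i, i \in S & a i != 0) /\
    (forall j, blk j = nu -> \sum_(i in S) a i * v i j = 0).

Definition lin_dep (N : nat) (blk : 'I_n -> 'I_N) (nu : 'I_N)
  (I : finType) (S : {set I}) (v : I -> 'I_n -> R) : Prop :=
  exists a : I -> R,
    (exists2 i, i \in S & a i != 0) /\
    (forall j, blk j = nu -> \sum_(i in S) a i * v i j = 0).

Definition gnep_feasible (m p : nat) (g : 'I_m -> 'rV[R]_n -> R)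
  (h : 'I_p -> 'rV[R]_n -> R) (x : 'rV[R]_n) : Prop :=
  (forall i, g i x <= 0) /\ (forall i, h i x <= 0).

Definition gnep_cpld (N m p : nat) (blk : 'I_n -> 'I_N)
  (g : 'I_m -> 'rV[R]_n -> R) (gblk : 'I_m -> 'I_N)
  (h : 'I_p -> 'rV[R]_n -> R) (hblk : 'I_p -> 'I_N) (x : 'rV[R]_n) : Prop :=
  forall (nu : 'I_N) (S : {set ('I_m + 'I_p)%type}),
    (forall i, i \in S -> cblk gblk hblk i = nu /\ cfun g h i x = 0) ->
    pos_lin_dep blk nu S (fun i j => partial (cfun g h i) j x) ->
    \forall y \near x, lin_dep blk nu S (fun i j => partial (cfun g h i) j y).

Definition gnep_emfcq (N m p : nat) (blk : 'I_n -> 'I_N)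
  (g : 'I_m -> 'rV[R]_n -> R) (gblk : 'I_m -> 'I_N)
  (h : 'I_p -> 'rV[R]_n -> R) (hblk : 'I_p -> 'I_N) (x : 'rV[R]_n) : Prop :=
  forall nu : 'I_N, exists d : 'I_n -> R,
    forall i : 'I_m + 'I_p, cblk gblk hblk i = nu -> 0 <= cfun g h i x ->
      \sum_(j | blk j == nu) partial (cfun g h i) j x * d j < 0.

Definition gnep_kkt (N m p : nat) (blk : 'I_n -> 'I_N)
  (theta : 'I_N -> 'rV[R]_n -> R)
  (g : 'I_m -> 'rV[R]_n -> R) (gblk : 'I_m -> 'I_N)
  (h : 'I_p -> 'rV[R]_n -> R) (hblk : 'I_p -> 'I_N) (x : 'rV[R]_n) : Prop :=
  forall nu : 'I_N, exists lam : 'I_m + 'I_p -> R,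
    (forall j, blk j = nu ->
       partial (theta nu) j x +
       \sum_(i | cblk gblk hblk i == nu) partial (cfun g h i) j x * lam i = 0) /\
    (forall i, cblk gblk hblk i = nu -> Num.min (- cfun g h i x) (lam i) = 0).

End GNEP.

From HB Require Import structures.
From mathcomp Require Import all_boot all_order all_algebra.
From mathcomp Require Import all_classical all_reals.
From mathcomp Require Import topology normedtype sequences derive.
From mathcomp Require Import ring lra.
Import Order.TTheory GRing.Theory Num.Theory.
Import numFieldNormedType.Exports.
Local Open Scope classical_set_scope.
Local Open Scope ring_scope.

(* Along the subsequence converging to xbar, the iterates x^{k+1} with the multipliers
   (lambda^{k+1}, mu^{k+1}) of each player nu form an approximate KKT sequence.  The
   gradient of the augmented Lagrangian is exactly the KKT residual with these
   multipliers, so the residual is at most eps_k; mu is asymptotically complementary to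
   h; and the multipliers of inactive constraints g_i vanish: either the complementarity
   measure V_nu eventually decreases geometrically, or rho_nu -> +oo, and then
   lambda_i^{k+1} = max(0, u_i^k + rho_k g_i(x^{k+1})) is eventually 0 when
   g_i(xbar) < 0 since u stays bounded.  Under EMFCQ the same dichotomy yields
   feasibility: a violated constraint would get a multiplier tending to +oo, which the
   residual projected on the EMFCQ direction forbids; EMFCQ also excludes positive linear
   dependence of active gradients, hence implies CPLD.
   Finally an approximate KKT sequence has a KKT limit under CPLD: by Caratheodory the
   multipliers can be supported on linearly independent gradients, with a support that
   is constant along a subsequence; after normalisation they converge, and if the weight
   of the objective gradient vanished in the limit, the active gradients would be
   positively linearly dependent at xbar, hence by CPLD linearly dependent near xbar,
   contradicting the choice of the supports. *)

Section LinearDependence.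
Context {R : realType} {n N : nat} (blk : 'I_n -> 'I_N) (nu : 'I_N).
Context {T : finType} (G : T -> 'I_n -> R).

Let supp (w : T -> R) := [set i | w i != 0]%SET.

(* Move along a vanishing combination until a first coefficient hits zero. *)
Lemma lin_dep_shrink_support {w : T -> R} :
  (forall i, 0 <= w i) -> lin_dep blk nu (supp w) G ->
  exists v : T -> R, [/\ forall i, 0 <= v i, forall i, w i = 0 -> v i = 0,
    forall j, blk j = nu -> \sum_i v i * G i j = \sum_i w i * G i j &
    (#|supp v| < #|supp w|)%N].
Proof.
move=> w_ge0 [a [[i1 i1S a1_neq0] a_dep]].
set S := supp w in i1S a_dep *.
pose b i := (if 0 < a i1 then 1 else -1) * a i.
have b1_gt0 : 0 < b i1.
  rewrite /b; case: ifPn => [|]; first by rewrite mul1r.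
  by rewrite -leNgt mulN1r oppr_gt0 lt_neqAle a1_neq0.
have b_dep j : blk j = nu -> \sum_(i in S) b i * G i j = 0.
  move=> /a_dep a_dep_j; under eq_bigr do rewrite -mulrA.
  by rewrite -mulr_sumr a_dep_j mulr0.
pose P := [pred i | (i \in S) && (0 < b i)].
have P_i1 : P i1 by rewrite /P /= i1S b1_gt0.
have [i0 /andP[i0S b0_gt0] i0_min] := arg_minP (fun i => w i / b i) P_i1.
set t := w i0 / b i0 in i0_min.
have w_gt0 i : i \in S -> 0 < w i by rewrite inE lt_def w_ge0 andbT.
have t_ge0 : 0 <= t by rewrite divr_ge0 // ltW // w_gt0.
pose v i := w i - t * (if i \in S then b i else 0).
exists v; split.
- move=> i; rewrite /v; case: ifPn => iS; last by rewrite mulr0 subr0.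
  have [b_gt0|b_le0] := ltP 0 (b i).
    have := i0_min i; rewrite /P /= iS b_gt0 => /(_ isT).
    by rewrite ler_pdivlMr // subr_ge0.
  by rewrite subr_ge0 (le_trans _ (w_ge0 i)) // mulr_ge0_le0.
- by move=> i wi0; rewrite /v ifN ?mulr0 ?subr0 // inE wi0 eqxx.
- move=> j /b_dep b_dep_j; rewrite /v.
  under eq_bigr do rewrite mulrBl -mulrA.
  rewrite sumrB -mulr_sumr [X in t * X](_ : _ = \sum_(i in S) b i * G i j).
    by rewrite b_dep_j mulr0 subr0.
  by rewrite [RHS]big_mkcond; apply: eq_bigr => i _; case: ifP; rewrite ?mul0r.
- have sub : supp v \subset S :\ i0.
    apply/fintype.subsetP => i; rewrite !inE /v.
    case: ifPn => iS; last by rewrite mulr0 subr0 => wi; move: iS; rewrite inE wi.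
    move=> vi; apply/andP; split; last by move: iS; rewrite inE.
    apply: contra_neq vi => ->.
    by rewrite /t divfK ?subrr // gt_eqF.
  by rewrite (leq_ltn_trans (subset_leq_card sub)) // (cardsD1 i0 S) i0S.
Qed.

Lemma caratheodory_lin_indep {A : {set T}} {w : T -> R} :
  (forall i, 0 <= w i) -> (forall i, i \notin A -> w i = 0) ->
  exists S : {set T}, exists v : T -> R,
   [/\ S \subset A, forall i, 0 <= v i, forall i, i \notin S -> v i = 0,
       ~ lin_dep blk nu S G &
       forall j, blk j = nu -> \sum_i v i * G i j = \sum_i w i * G i j].
Proof.
elim: {w}#|supp w| {-2}w (leqnn #|supp w|) => [|k IHk] w supp_w w_ge0 wA.
  have supp0 : supp w = finset.set0 by apply/eqP; rewrite -cards_eq0 -leqn0.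
  exists finset.set0, w; split => //; first exact: finset.sub0set.
  - move=> i _; have : i \notin supp w by rewrite supp0 finset.in_set0.
    by rewrite inE negbK => /eqP.
  - by case=> a [[i]]; rewrite finset.in_set0.
have [dep|indep] := pselect (lin_dep blk nu (supp w) G); last first.
  exists (supp w), w; split => //.
  - by apply/fintype.subsetP => i; rewrite inE; apply: contraR => /wA ->.
  - by move=> i; rewrite inE negbK => /eqP.
have [v [v_ge0 vw vG v_supp]] := lin_dep_shrink_support w_ge0 dep.
have [|S [u [SA u_ge0 uS u_indep uG]]] := IHk v (leq_trans v_supp supp_w) v_ge0.
  by move=> i /wA /vw.
by exists S, u; split => // j bj; rewrite uG // vG.
Qed.

Lemma descent_dir_not_pos_lin_dep (S : {set T}) (d : 'I_n -> R) :
  (forall i, i \in S -> \sum_(j | blk j == nu) G i j * d j < 0) ->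
  ~ pos_lin_dep blk nu S G.
Proof.
move=> Gd_lt0 [a [a_ge0 [[i1 i1S a1_neq0] a_dep]]].
have : \sum_(i in S) a i * \sum_(j | blk j == nu) G i j * d j = 0.
  under eq_bigr do rewrite mulr_sumr.
  rewrite exchange_big big1 //= => j /eqP /a_dep a_dep_j.
  by under eq_bigr do rewrite mulrA; rewrite -mulr_suml a_dep_j mul0r.
rewrite (bigD1 i1) //=; apply/eqP; rewrite lt_eqF //.
have : a i1 * \sum_(j | blk j == nu) G i1 j * d j < 0.
  by rewrite pmulr_rlt0 ?Gd_lt0 // lt_def a1_neq0 a_ge0.
have : \sum_(i in S | i != i1) a i * \sum_(j | blk j == nu) G i j * d j <= 0.
  by apply: sumr_le0 => i /andP[iS _]; rewrite mulr_ge0_le0 ?a_ge0 // ltW // Gd_lt0.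
lra.
Qed.

End LinearDependence.

Section Subsequences.
Context {R : realType}.

Lemma cvg_subseq {T : Type} {u : nat -> T} {F : set_system T} {f : nat -> nat} :
  (forall k, (k <= f k)%N) -> u @ \oo --> F -> (u \o f) @ \oo --> F.
Proof.
move=> f_ge u_l; apply: cvg_comp u_l => A [K _ KA].
by exists K => // k /= Kk; apply: KA; apply: leq_trans Kk (f_ge k).
Qed.

Lemma ltn_step_ge {f : nat -> nat} : (forall k, (f k < f k.+1)%N) -> forall k, (k <= f k)%N.
Proof. by move=> f_step; elim=> // k IHk; apply: leq_ltn_trans IHk (f_step k). Qed.

Lemma fin_cst_subseq {T : finType} (s : nat -> T) :
  exists t, exists f : nat -> nat, (forall k, (k <= f k)%N) /\ forall k, s (f k) = t.
Proof.
have [t [A A_inf As]] := finite_range_cst_subsequence (@finite_finset _ (range s)).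
have [|f [/increasing_seqP f_step _ Af]] := infinite_increasing_seq_wf _ A_inf 0%N.
  by move=> k; apply: sub_finite_set (finite_II k.+1) => i /=.
by exists t, f; split; [exact: ltn_step_ge | move=> k; apply/As/Af].
Qed.

Lemma bounded_cvg_subseq {I : finType} {z : nat -> I -> R} {B : R} :
  (forall k i, `|z k i| <= B) ->
  exists f : nat -> nat, (forall k, (k <= f k)%N) /\
    forall i, exists l : R, (fun k => z (f k) i) @ \oo --> l.
Proof.
move=> z_le; suff [f [f_ge f_cvg]] : exists f : nat -> nat, (forall k, (k <= f k)%N) /\
    forall i, i \in enum I -> exists l : R, (fun k => z (f k) i) @ \oo --> l.
  by exists f; split => // i; apply: f_cvg; rewrite mem_enum.
elim: (enum I) => [|a s [f [f_ge f_cvg]]]; first by exists id.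
have a_bnd : bounded_fun (fun k => z (f k) a).
  by exists B; split; rewrite ?num_real // => M BM k _; apply: le_trans (ltW BM).
have [g /increasing_seqP g_step /cvg_ex[la g_la]] := bolzano_weierstrass a_bnd.
have g_ge := ltn_step_ge g_step.
exists (f \o g); split => [k|i]; first exact: leq_trans (g_ge k) (f_ge _).
rewrite inE => /predU1P[->|/f_cvg[l f_l]]; first by exists la.
by exists l; apply: (cvg_subseq g_ge f_l).
Qed.

Lemma cvg_sum {I : Type} {r : seq I} {P : pred I} {f : I -> nat -> R} {l : I -> R} :
  (forall i, P i -> f i @ \oo --> l i) ->
  (fun k => \sum_(i <- r | P i) f i k) @ \oo --> \sum_(i <- r | P i) l i.
Proof. by move=> f_l; apply: cvg_big => //; exact: add_continuous. Qed.

Lemma cvg_cst_lim {u : nat -> R} {c l : R} : (forall k, u k = c) -> u @ \oo --> l -> l = c.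
Proof. by move=> uc; rewrite (funext uc) => cl; apply: cvg_unique cl (cvg_cst c). Qed.

Lemma norm_le_cvg0 {u e : nat -> R} :
  (\forall k \near \oo, `|u k| <= e k) -> e @ \oo --> 0 -> u @ \oo --> 0.
Proof.
move=> u_le e0; have Ne0 : (- e) @ \oo --> 0 by rewrite -oppr0; exact: cvgN.
by apply: squeeze_cvgr Ne0 e0; apply: filterS u_le => k; rewrite -ler_norml.
Qed.

End Subsequences.

Section BlockKKT.
Context {R : realType} {n N : nat} (blk : 'I_n -> 'I_N) (nu : 'I_N) {T : finType}.
Context (c : T -> 'rV[R]_n -> R) (cb : T -> 'I_N).
Context (dth : 'I_n -> 'rV[R]_n -> R) (Dc : T -> 'I_n -> 'rV[R]_n -> R) (xbar : 'rV[R]_n).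

(* Player nu's KKT conditions and constraint qualifications for an abstract constraint
   family c, constraint i belonging to player cb i; dth j and Dc i j stand for the
   partial derivatives of nu's objective and of c i along coordinate j. *)
Definition block_kkt := exists lam : T -> R,
  (forall j, blk j = nu -> dth j xbar + \sum_(i | cb i == nu) Dc i j xbar * lam i = 0) /\
  (forall i, cb i = nu -> Num.min (- c i xbar) (lam i) = 0).

Definition block_emfcq := exists d : 'I_n -> R, forall i, cb i = nu -> 0 <= c i xbar ->
  \sum_(j | blk j == nu) Dc i j xbar * d j < 0.

Definition block_cpld := forall S : {set T},
  (forall i, i \in S -> cb i = nu /\ c i xbar = 0) ->
  pos_lin_dep blk nu S (fun i j => Dc i j xbar) ->
  \forall z \near xbar, lin_dep blk nu S (fun i j => Dc i j z).

Hypothesis dth_cont : forall j, {for xbar, continuous (dth j)}.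
Hypothesis Dc_cont : forall i j, {for xbar, continuous (Dc i j)}.

(* Dividing (1, v_k) by 1 + sum v_k bounds the multipliers, so a subsequence converges. *)
Lemma normalized_multipliers_limit {y : nat -> 'rV[R]_n} {v : nat -> T -> R} :
  y @ \oo --> xbar -> (forall k i, 0 <= v k i) ->
  (forall j, blk j = nu ->
    (fun k => dth j (y k) + \sum_i v k i * Dc i j (y k)) @ \oo --> 0) ->
  exists s (a : T -> R), [/\ 0 <= s, forall i, 0 <= a i, s + \sum_i a i = 1,
    forall i, (forall k, v k i = 0) -> a i = 0 &
    forall j, blk j = nu -> s * dth j xbar + \sum_i a i * Dc i j xbar = 0].
Proof.
move=> y_cvg v_ge0 res_cvg.
pose t k := 1 + \sum_i v k i.
have t_gt0 k : 0 < t k by rewrite ltr_wpDr ?ltr01 // sumr_ge0.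
pose z k (o : option T) := (if o is Some i then v k i else 1) / t k.
have z_ge0 k o : 0 <= z k o.
  by apply: divr_ge0 (ltW (t_gt0 k)); case: o => [i|]; rewrite ?ler01 ?v_ge0.
have z_le1 k o : `|z k o| <= 1.
  rewrite ger0_norm // ler_pdivrMr // mul1r /t; case: o => [i|]; last by rewrite lerDl sumr_ge0.
  by rewrite (bigD1 i) //= addrCA lerDl addr_ge0 ?ler01 ?sumr_ge0.
have z_sum k : z k None + \sum_i z k (Some i) = 1.
  by rewrite /z /= -mulr_suml -mulrDl -/(t k) divff // lt0r_neq0.
have [f [f_ge /choice[L z_cvg]]] := bounded_cvg_subseq z_le1.
pose s := L None; pose a i := L (Some i).
have s_cvg : (fun k => z (f k) None) @ \oo --> s := z_cvg None.
have a_cvg i : (fun k => z (f k) (Some i)) @ \oo --> a i := z_cvg (Some i).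
exists s, a; split.
- by apply: cvgr_to_ge s_cvg _; apply: nearW.
- by move=> i; apply: cvgr_to_ge (a_cvg i) _; apply: nearW.
- have sum_cvg : (fun k => \sum_i z (f k) (Some i)) @ \oo --> \sum_i a i.
    by apply: cvg_sum => i _; exact: a_cvg.
  by apply: cvg_cst_lim _ (cvgD s_cvg sum_cvg) => k; exact: z_sum.
- by move=> i vi0; apply: cvg_cst_lim _ (a_cvg i) => k; rewrite /z vi0 mul0r.
move=> j bj.
have yf_cvg := cvg_subseq f_ge y_cvg.
have lim1 : (fun k => z (f k) None * dth j (y (f k)) +
    \sum_i z (f k) (Some i) * Dc i j (y (f k))) @ \oo -->
    s * dth j xbar + \sum_i a i * Dc i j xbar.
  apply: cvgD; first by apply: cvgM s_cvg _; exact: (continuous_cvg _ (dth_cont j) yf_cvg).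
  apply: cvg_sum => i _; apply: cvgM (a_cvg i) _.
  exact: (continuous_cvg _ (Dc_cont i j) yf_cvg).
have lim2 : (fun k => z (f k) None * dth j (y (f k)) +
    \sum_i z (f k) (Some i) * Dc i j (y (f k))) @ \oo --> 0.
  have -> : (fun k => z (f k) None * dth j (y (f k)) +
      \sum_i z (f k) (Some i) * Dc i j (y (f k))) =
      (fun k => z (f k) None * (dth j (y (f k)) + \sum_i v (f k) i * Dc i j (y (f k)))).
    apply/funext => k; rewrite mulrDr mulr_sumr; congr (_ + _).
    by apply: eq_bigr => i _; rewrite /z mul1r mulrAC mulrC.
  rewrite -[X in _ --> X](mulr0 s); apply: cvgM s_cvg _; exact: cvg_subseq f_ge (res_cvg j bj).
exact: cvg_unique lim1 lim2.
Qed.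

Lemma caratheodory_subseq (A : {set T}) {y : nat -> 'rV[R]_n} {w : nat -> T -> R} :
  (forall k i, 0 <= w k i) -> (forall k i, i \notin A -> w k i = 0) ->
  exists (S : {set T}) (sigma : nat -> nat) (v : nat -> T -> R),
  (forall k, (k <= sigma k)%N) /\
  [/\ (S \subset A)%SET, forall k i, 0 <= v k i, forall k i, i \notin S -> v k i = 0,
      forall k, ~ lin_dep blk nu S (fun i j => Dc i j (y (sigma k))) &
      forall k j, blk j = nu ->
        \sum_i v k i * Dc i j (y (sigma k)) = \sum_i w (sigma k) i * Dc i j (y (sigma k))].
Proof.
move=> w_ge0 w_A.
have /choice[Sv Sv_spec] k : exists Sv : {set T} * (T -> R),
    [/\ (Sv.1 \subset A)%SET, forall i, 0 <= Sv.2 i, forall i, i \notin Sv.1 -> Sv.2 i = 0,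
      ~ lin_dep blk nu Sv.1 (fun i j => Dc i j (y k)) &
      forall j, blk j = nu -> \sum_i Sv.2 i * Dc i j (y k) = \sum_i w k i * Dc i j (y k)].
  have [S [v]] := caratheodory_lin_indep blk nu (fun i j => Dc i j (y k)) (w_ge0 k) (w_A k).
  by exists (S, v).
have [S [sigma [sigma_ge SvS]]] := fin_cst_subseq (fun k => (Sv k).1).
have {}SvS k : (Sv (sigma k)).1 = S := SvS k.
exists S, sigma, (fun k => (Sv (sigma k)).2); split => //; split.
- by have [] := Sv_spec (sigma 0%N); rewrite SvS.
- by move=> k i; have [_ + _ _ _] := Sv_spec (sigma k); apply.
- by move=> k i; have [_ _ + _ _] := Sv_spec (sigma k); rewrite SvS; apply.
- by move=> k; have [_ _ _ + _] := Sv_spec (sigma k); rewrite SvS.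
- by move=> k j; have [_ _ _ _] := Sv_spec (sigma k); apply.
Qed.

Lemma nonneg_active_multipliers_kkt {y : nat -> 'rV[R]_n} {w : nat -> T -> R} :
  y @ \oo --> xbar ->
  (forall i, cb i = nu -> c i xbar <= 0) ->
  (forall k i, 0 <= w k i) ->
  (forall k i, w k i != 0 -> cb i = nu /\ c i xbar = 0) ->
  (forall j, blk j = nu ->
    (fun k => dth j (y k) + \sum_i w k i * Dc i j (y k)) @ \oo --> 0) ->
  block_cpld -> block_kkt.
Proof.
move=> y_cvg c_le0 w_ge0 w_act res_cvg cpld.
pose A := [set i | (cb i == nu) && (c i xbar == 0)]%SET.
have A_act i : i \in A -> cb i = nu /\ c i xbar = 0 by rewrite inE => /andP[/eqP-> /eqP->].
have w_A k i : i \notin A -> w k i = 0.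
  by move=> iA; apply/eqP; apply: contraR iA => /w_act[ci cx]; rewrite inE ci cx !eqxx.
have [S0 [sigma [v [sigma_ge [S0A v_ge0 v_S0 v_indep v_w]]]]] :=
  caratheodory_subseq A (y := y) w_ge0 w_A.
have ysig_cvg := cvg_subseq sigma_ge y_cvg.
have v_res j : blk j = nu ->
    (fun k => dth j (y (sigma k)) + \sum_i v k i * Dc i j (y (sigma k))) @ \oo --> 0.
  move=> bj; under eq_cvg => k do rewrite v_w //.
  exact: cvg_subseq sigma_ge (res_cvg j bj).
have [s [a [s_ge0 a_ge0 sa1 a0 lim]]] := normalized_multipliers_limit ysig_cvg v_ge0 v_res.
have a_S0 i : i \notin S0 -> a i = 0 by move=> iS0; apply: a0 => k; exact: v_S0.
have S0_act i : i \in S0 -> cb i = nu /\ c i xbar = 0 by move/(fintype.subsetP S0A)/A_act.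
have a_act i : a i != 0 -> cb i = nu /\ c i xbar = 0.
  by move=> ai; apply: S0_act; apply: contraR ai => /a_S0 ->.
have [s0|s_neq0] := eqVneq s 0.
  have [i0 ai0] : exists i, a i != 0.
    apply: contrapT => /forallNP a_eq0; move: sa1; rewrite s0 add0r big1 => [/esym/eqP|i _].
      by rewrite oner_eq0.
    by apply/eqP/negPn/negP/a_eq0.
  have pld : pos_lin_dep blk nu S0 (fun i j => Dc i j xbar).
    exists a; split; first by move=> i _.
    split; first by exists i0 => //; apply: contraR ai0 => /a_S0 ->.
    move=> j /lim; rewrite s0 mul0r add0r (bigID (mem S0)) /= [X in _ + X]big1 ?addr0 //.
    by move=> i /a_S0 ->; rewrite mul0r.
  have [K _ KS0] := ysig_cvg _ (cpld S0 S0_act pld).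
  by case: (v_indep K (KS0 K (leqnn K))).
have s_gt0 : 0 < s by rewrite lt_def s_neq0.
exists (fun i => a i / s); split => [j bj|i ci].
  apply: (mulfI s_neq0); rewrite mulr0 -[RHS](lim j bj) mulrDr; congr (_ + _).
  rewrite mulr_sumr [RHS](bigID (fun i => cb i == nu)) /= [X in _ + X]big1 ?addr0.
    by apply: eq_bigr => i _; rewrite [Dc i j xbar * _]mulrC mulrA mulrCA divff // mulr1.
  by move=> i /eqP ci; case: (eqVneq (a i) 0) => [->|/a_act[]//]; rewrite mul0r.
case: (eqVneq (a i) 0) => [->|/a_act[_ ->]]; rewrite ?mul0r ?oppr0.
  by apply: min_r; rewrite oppr_ge0 c_le0.
by apply: min_l; rewrite divr_ge0 // ltW.
Qed.

Lemma emfcq_block_cpld : block_emfcq -> block_cpld.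
Proof.
move=> [d Dd] S S_act pld; exfalso.
apply: (descent_dir_not_pos_lin_dep _ _ _ _ d _ pld) => i /S_act[ci cx].
by apply: Dd; rewrite ?cx.
Qed.

Section ApproximateKKT.
Variables (y : nat -> 'rV[R]_n) (w : nat -> T -> R).
Hypothesis y_cvg : y @ \oo --> xbar.
Hypothesis w_lower : forall i, cb i = nu ->
  exists2 e : nat -> R, e @ \oo --> 0 & forall k, - e k <= w k i.
Hypothesis w_inactive : forall i, cb i = nu -> c i xbar < 0 -> (fun k => w k i) @ \oo --> 0.
Hypothesis res_cvg : forall j, blk j = nu ->
  (fun k => dth j (y k) + \sum_(i | cb i == nu) Dc i j (y k) * w k i) @ \oo --> 0.

(* Replacing w by its positive part on the active constraints (and 0 elsewhere)
   only perturbs the residual by a vanishing amount. *)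
Lemma approx_kkt_block_kkt :
  (forall i, cb i = nu -> c i xbar <= 0) -> block_cpld -> block_kkt.
Proof.
move=> c_le0 cpld.
pose act i := (cb i == nu) && (c i xbar == 0).
pose v k i := if act i then Num.max 0 (w k i) else 0.
have vw_cvg i : cb i = nu -> (fun k => v k i - w k i) @ \oo --> 0.
  move=> ci; rewrite /v /act ci eqxx /=; have [cx|cx] := eqVneq (c i xbar) 0.
    have [e e0 we] := w_lower i ci.
    have abs_e0 : (fun k => `|e k|) @ \oo --> 0 by rewrite -(@normr0 _ R); exact: cvg_norm.
    apply: norm_le_cvg0 abs_e0; apply: nearW => k /=.
    have [w_ge0|w_lt0] := leP 0 (w k i); first by rewrite subrr normr0.
    by rewrite add0r normrN ltr0_norm // lerNl (le_trans _ (we k)) // lerN2 ler_norm.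
  have cx_lt0 : c i xbar < 0 by rewrite lt_neqAle cx c_le0.
  by under eq_fun do rewrite sub0r; rewrite -oppr0; apply: cvgN; exact: w_inactive.
apply: (nonneg_active_multipliers_kkt (w := v) y_cvg c_le0 _ _ _ cpld).
- by move=> k i; rewrite /v; case: ifP; rewrite ?le_max ?lexx.
- by move=> k i; rewrite /v /act; case: ifP => [/andP[/eqP-> /eqP->]|]; rewrite ?eqxx.
move=> j bj.
have gap_cvg : (fun k => \sum_(i | cb i == nu) Dc i j (y k) * (v k i - w k i)) @ \oo --> 0.
  rewrite [X in _ --> X](_ : 0 = \sum_(i | cb i == nu) Dc i j xbar * 0); last first.
    by rewrite big1 // => i _; rewrite mulr0.
  apply: cvg_sum => i /eqP ci; apply: cvgM (vw_cvg i ci).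
  exact: (continuous_cvg _ (Dc_cont i j) y_cvg).
have -> : (fun k => dth j (y k) + \sum_i v k i * Dc i j (y k)) =
    (fun k => (dth j (y k) + \sum_(i | cb i == nu) Dc i j (y k) * w k i) +
              \sum_(i | cb i == nu) Dc i j (y k) * (v k i - w k i)).
  apply/funext => k; rewrite -addrA -big_split /=; congr (_ + _).
  rewrite (bigID (fun i => cb i == nu)) /= [X in _ + X]big1 ?addr0.
    by apply: eq_bigr => i _; rewrite -mulrDr addrC subrK mulrC.
  by move=> i /negbTE nci; rewrite /v /act nci mul0r.
by rewrite -[X in _ --> X](addr0 0); apply: cvgD (res_cvg j bj) gap_cvg.
Qed.

Let slope (d : 'I_n -> R) (z : 'rV[R]_n) i := \sum_(j | blk j == nu) Dc i j z * d j.

Lemma slope_cvg d i : (fun k => slope d (y k) i) @ \oo --> slope d xbar i.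
Proof.
apply: cvg_sum => j _; apply: cvgM _ (cvg_cst _).
exact: (continuous_cvg _ (Dc_cont i j) y_cvg).
Qed.

Lemma residual_dir_cvg0 (d : 'I_n -> R) :
  (fun k => \sum_(j | blk j == nu) dth j (y k) * d j +
            \sum_(i | cb i == nu) w k i * slope d (y k) i) @ \oo --> 0.
Proof.
have -> : (fun k => \sum_(j | blk j == nu) dth j (y k) * d j +
    \sum_(i | cb i == nu) w k i * slope d (y k) i) = (fun k =>
    \sum_(j | blk j == nu) (dth j (y k) + \sum_(i | cb i == nu) Dc i j (y k) * w k i) * d j).
  apply/funext => k; under [RHS]eq_bigr do rewrite mulrDl mulr_suml.
  rewrite big_split /= exchange_big /=; congr (_ + _); apply: eq_bigr => i _.
  by rewrite mulr_sumr; apply: eq_bigr => j _; rewrite mulrCA mulrA.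
rewrite [X in _ --> X](_ : 0 = \sum_(j | blk j == nu) 0 * d j); last first.
  by rewrite big1 // => j _; rewrite mul0r.
by apply: cvg_sum => j /eqP bj; apply: cvgM (res_cvg j bj) (cvg_cst _).
Qed.

Lemma mult_slope_le1 (d : 'I_n -> R) :
  (forall i, cb i = nu -> 0 <= c i xbar -> slope d xbar i < 0) ->
  \forall k \near \oo, forall i, cb i == nu -> w k i * slope d (y k) i <= 1.
Proof.
move=> Dd; apply: filter_forall => i; have [/eqP ci|_] := boolP (cb i == nu); last exact: nearW.
have [cx|cx] := ltP (c i xbar) 0.
  have wsl0 : (fun k => w k i * slope d (y k) i) @ \oo --> 0 * slope d xbar i.
    by apply: cvgM (slope_cvg d i); exact: w_inactive.
  rewrite mul0r in wsl0.
  by apply: filterS (cvgr_lt _ wsl0 1 ltr01) => k /ltW wsl_le1 _.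
have [e e0 we] := w_lower i ci.
have esl0 : (fun k => - e k * slope d (y k) i) @ \oo --> - 0 * slope d xbar i.
  by apply: cvgM (slope_cvg d i); exact: cvgN.
rewrite oppr0 mul0r in esl0.
have esl_lt1 := cvgr_lt _ esl0 1 ltr01.
have sl_lt0 := cvgr_lt _ (slope_cvg d i) 0 (Dd i ci cx).
near=> k => _; have := we k; have : - e k * slope d (y k) i < 1 by near: k; exact: esl_lt1.
have : slope d (y k) i < 0 by near: k; exact: sl_lt0.
nra.
Unshelve. all: by end_near.
Qed.

(* Along the EMFCQ direction d the projected residual tends to 0 while its terms stay
   bounded above, except the one of a multiplier tending to +oo, which tends to -oo. *)
Lemma emfcq_mult_not_cvgy (d : 'I_n -> R) (i0 : T) :
  (forall i, cb i = nu -> 0 <= c i xbar -> \sum_(j | blk j == nu) Dc i j xbar * d j < 0) ->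
  cb i0 = nu -> 0 <= c i0 xbar -> ~ (fun k => w k i0) @ \oo --> +oo.
Proof.
move=> Dd ci0 cx0 /cvgryPge w0_cvgy.
pose th k := \sum_(j | blk j == nu) dth j (y k) * d j.
pose th_lim := \sum_(j | blk j == nu) dth j xbar * d j.
have th_cvg : th @ \oo --> th_lim.
  apply: cvg_sum => j _; apply: cvgM _ (cvg_cst _).
  exact: (continuous_cvg _ (dth_cont j) y_cvg).
have sl0_lt0 : slope d xbar i0 < 0 := Dd i0 ci0 cx0.
pose Kc := \sum_(i : T) (1 : R).
pose M := 2 * (`|th_lim| + 3 + Kc) / - slope d xbar i0.
have Kc_ge0 : 0 <= Kc by apply: sumr_ge0 => i _; exact: ler01.
have M_ge0 : 0 <= M.
  by apply: divr_ge0; [have := normr_ge0 th_lim; lra | rewrite oppr_ge0 ltW].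
have [K _ KF] : \forall k \near \oo, False.
  near=> k.
  have : -1 < th k + \sum_(i | cb i == nu) w k i * slope d (y k) i.
    by near: k; apply: cvgr_gt (residual_dir_cvg0 d) _ _; rewrite ltrN10.
  have : th k < th_lim + 1 by near: k; apply: cvgr_lt th_cvg _ _; rewrite ltrDl.
  have : slope d (y k) i0 < slope d xbar i0 / 2.
    by near: k; apply: cvgr_lt (slope_cvg d i0) _ _; lra.
  have : M <= w k i0 by near: k; exact: w0_cvgy.
  have sl_le1 : forall i, cb i == nu -> w k i * slope d (y k) i <= 1.
    by near: k; exact: mult_slope_le1.
  rewrite (bigD1 i0) /=; last exact/eqP.
  have : \sum_(i | (cb i == nu) && (i != i0)) w k i * slope d (y k) i <= Kc.
    rewrite /Kc big_mkcond /=; apply: ler_sum => i _.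
    by case: ifP => [/andP[/sl_le1]|]; rewrite ?ler01.
  have : M * (slope d xbar i0 / 2) = - (`|th_lim| + 3 + Kc).
    by rewrite /M; field; rewrite ?oppr_eq0 (lt_eqF sl0_lt0).
  have := ler_norm th_lim; have := sl0_lt0.
  nra.
exact: KF K (leqnn K).
Unshelve. all: by end_near.
Qed.

End ApproximateKKT.

End BlockKKT.

Section PenaltyUpdate.
Context {R : realType}.

Lemma exprn_unbounded {g : R} : 1 < g -> forall A, exists t, A <= g ^+ t.
Proof.
move=> g_gt1 A.
have bernoulli t : 1 + t%:R * (g - 1) <= g ^+ t.
  elim: t => [|t IHt]; first by rewrite mul0r addr0 expr0.
  rewrite exprS -addn1 natrD mulrDl mul1r.
  have : 0 <= t%:R * ((g - 1) * (g - 1)) by rewrite mulr_ge0 ?ler0n // mulr_ge0 //; lra.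
  nra.
have g1_gt0 : 0 < g - 1 by lra.
have := archi_boundP (divr_ge0 (normr_ge0 A) (ltW g1_gt0)).
set t := Num.Def.archi_bound _; rewrite ltr_pdivrMr // => At.
exists t; have := bernoulli t; have := ler_norm A; lra.
Qed.

Context {V rho : nat -> R} {tau gamma : R}.
Hypothesis tau_gt0 : 0 < tau.
Hypothesis tau_lt1 : tau < 1.
Hypothesis gamma_gt1 : 1 < gamma.
Hypothesis rho0_gt0 : 0 < rho 0%N.
Hypothesis V_ge0 : forall k, 0 <= V k.
Hypothesis rho_update : forall k,
  rho k.+1 = if V k.+1 <= tau * V k then rho k else gamma * rho k.

Lemma penalty_gt0 k : 0 < rho k.
Proof.
elim: k => // k IHk; rewrite rho_update; case: ifP => // _.
by rewrite mulr_gt0 // (lt_trans ltr01).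
Qed.

Lemma penalty_nondecreasing : {homo rho : k l / (k <= l)%N >-> k <= l}.
Proof.
apply/nondecreasing_seqP => k; rewrite rho_update; case: ifP => // _.
by rewrite ler_peMl ?ltW ?penalty_gt0.
Qed.

Lemma penalty_dichotomy : V @ \oo --> 0 \/ rho @ \oo --> +oo.
Proof.
have [[K V_dec]|V_inc] := pselect (exists K, forall k, (K <= k)%N -> V k.+1 <= tau * V k).
  left; pose C := V K / tau ^+ K.
  have V_geo t : V (K + t)%N <= C * tau ^+ (K + t).
    elim: t => [|t IHt]; first by rewrite addn0 /C divfK // expf_neq0 // gt_eqF.
    rewrite addnS exprS (le_trans (V_dec _ (leq_addr _ _))) // mulrCA ler_pM2l //.
  have tau_norm_lt1 : `|tau| < 1 by rewrite ger0_norm // ltW.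
  apply: norm_le_cvg0 (cvg_geometric C tau_norm_lt1).
  near=> k; have Kk : (K <= k)%N by near: k; exists K.
  by rewrite ger0_norm ?V_ge0 // -(subnKC Kk); exact: V_geo.
right; apply/cvgryPge => A.
have [t At] := exprn_unbounded gamma_gt1 (A / rho 0%N).
suff [K AK] : exists K, rho 0%N * gamma ^+ t <= rho K.
  near=> k; have Kk : (K <= k)%N by near: k; exists K.
  apply: le_trans _ (penalty_nondecreasing _ _ Kk); apply: le_trans _ AK.
  by rewrite mulrC -ler_pdivrMr.
elim: t {At} => [|t [K AK]]; first by exists 0%N; rewrite expr0 mulr1.
have [k [Kk k_inc]] : exists k, (K <= k)%N /\ ~ V k.+1 <= tau * V k.
  apply: contrapT => no_inc; apply: V_inc; exists K => k Kk.
  by apply: contrapT => k_inc; apply: no_inc; exists k.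
exists k.+1; rewrite rho_update ifN; last exact/negP.
rewrite exprS mulrCA ler_pM2l ?(lt_trans ltr01) //.
exact: le_trans AK (penalty_nondecreasing _ _ Kk).
Unshelve. all: by end_near.
Qed.

End PenaltyUpdate.

Section AugmentedLagrangianGradient.
Context {R : realType}.

Let sqp (s : R) := Num.max 0 s ^+ 2.

Lemma sqp_taylor (t h : R) :
  `|2 * Num.max 0 t * h - (sqp (h + t) - sqp t)| <= h ^+ 2.
Proof.
rewrite /sqp ler_norml.
by have [t0|t0] := leP 0 t; have [ht0|ht0] := leP 0 (h + t); apply/andP; split; nra.
Qed.

Lemma is_derive_sqp (t : R) : is_derive t 1 sqp (2 * Num.max 0 t).
Proof.
suff quot_cvg : (fun h : R => h^-1 *: ((sqp \o shift t) (h *: 1) - sqp t)) @ 0^' -->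
    2 * Num.max 0 t.
  apply: DeriveDef; first by apply/cvg_ex; exists (2 * Num.max 0 t).
  exact: cvg_lim quot_cvg.
apply/cvgrPdist_le => e e0; near=> h.
have h_neq0 : h != 0 by near: h; exact: nbhs_dnbhs_neq.
have h_le : `|h| <= e by near: h; exact: dnbhs0_le.
rewrite /= [_%:A]mulr1 -[h^-1 *: _]/(h^-1 * _).
have -> : 2 * Num.max 0 t - h^-1 * (sqp (h + t) - sqp t) =
    h^-1 * (2 * Num.max 0 t * h - (sqp (h + t) - sqp t)) by field.
rewrite normrM normrV ?unitfE // ler_pdivrMl ?normr_gt0 // (le_trans (sqp_taylor t h)) //.
by rewrite -[h ^+ 2]ger0_norm ?sqr_ge0 // normrX expr2 ler_pM2l ?normr_gt0.
Unshelve. all: by end_near.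
Qed.

Variable n : nat.
Implicit Types (f : 'rV[R]_n -> R) (x v : 'rV[R]_n).

Lemma is_derive_sqp_comp f x v : differentiable f x ->
  is_derive x v (sqp \o f) (2 * Num.max 0 (f x) * 'D_v f x).
Proof.
move=> df; have dsqp s : differentiable sqp s.
  by apply/derivable1_diffP; exact: (@ex_derive _ _ _ _ _ _ _ (is_derive_sqp s)).
have dsqpf : differentiable (sqp \o f) x by apply: differentiable_comp.
apply: DeriveDef; first exact: diff_derivable.
rewrite deriveE // diff_comp //= deriv1E; last first.
  exact: (@ex_derive _ _ _ _ _ _ _ (is_derive_sqp _)).
rewrite derive1E (@derive_val _ _ _ _ _ _ _ (is_derive_sqp _)) -deriveE //.
by rewrite -[_ *: _]/(_ * _) mulrC.
Qed.

Lemma is_derive_sum_fun {I : Type} (r : seq I) (P : pred I) {F : I -> 'rV[R]_n -> R}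
    {dF : I -> R} {x v : 'rV[R]_n} :
  (forall i, P i -> is_derive x v (F i) (dF i)) ->
  is_derive x v (\sum_(i <- r | P i) F i) (\sum_(i <- r | P i) dF i).
Proof.
move=> F_dF; elim/big_rec2: _ => [|i G dG Pi G_dG]; first exact: is_derive_cst.
exact: is_deriveD (F_dF i Pi) G_dG.
Qed.

Lemma partial_La (N m : nat) (theta : 'I_N -> 'rV[R]_n -> R)
    (g : 'I_m -> 'rV[R]_n -> R) (gblk : 'I_m -> 'I_N) (nu : 'I_N)
    x (u : 'I_m -> R) (r : R) (j : 'I_n) :
  differentiable (theta nu) x -> (forall i, differentiable (g i) x) ->
  partial (fun y => La theta g gblk nu y u r) j x =
  partial (theta nu) j x +
  \sum_(i | gblk i == nu) partial (g i) j x * (r * Num.max 0 (g i x + u i / r)).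
Proof.
move=> dtheta dg; pose gu i := g i + cst (u i / r).
have dgu i : is_derive x (@evec R n j) (sqp \o gu i)
    (2 * Num.max 0 (g i x + u i / r) * partial (g i) j x).
  have dgu_i : differentiable (gu i) x by apply: differentiableD.
  rewrite /partial -[g i x + _]/(gu i x) -[X in _ * X](addr0 ('D_(@evec R n j) (g i) x)).
  rewrite -[X in _ * (_ + X)](derive_cst (u i / r) x (@evec R n j)) -deriveD ?derivable_cst //.
    exact: is_derive_sqp_comp.
  exact: diff_derivable.
have := is_deriveD (derivableP (diff_derivable dtheta)) (is_deriveZ (r / 2)
  (is_derive_sum_fun (index_enum 'I_m) (fun i => gblk i == nu) (fun i _ => dgu i))).
have -> : (fun y => La theta g gblk nu y u r) =
    theta nu + (r / 2) \*: \sum_(i | gblk i == nu) (sqp \o gu i).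
  by apply/funext => y; rewrite /La fct_sumE.
move=> dLa; rewrite /partial (@derive_val _ _ _ _ _ _ _ dLa); congr (_ + _).
rewrite scaler_sumr; apply: eq_bigr => i _; rewrite /partial.
by change ((r / 2) *: ?a) with ((r / 2) * a); field.
Qed.

End AugmentedLagrangianGradient.

Section Complementarity.
Context {R : realType}.

Lemma ler_norm_bnorm {I : finType} (P : pred I) (v : I -> R) j : P j -> `|v j| <= bnorm P v.
Proof.
move=> Pj; rewrite /bnorm -sqrtr_sqr ler_sqrt ?sumr_ge0 // => [|i _]; last exact: sqr_ge0.
by rewrite (bigD1 j) //= lerDl sumr_ge0 // => i _; exact: sqr_ge0.
Qed.

Lemma approx_compl_limit {a b e : nat -> R} {a0 : R} :
  a @ \oo --> a0 -> e @ \oo --> 0 -> (forall k, `|Num.min (a k) (b k)| <= e k) ->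
  [/\ 0 <= a0, forall k, - e k <= b k & 0 < a0 -> b @ \oo --> 0].
Proof.
move=> a_cvg e0 ab_le.
have ab_ge k : - e k <= a k /\ - e k <= b k.
  by have := ab_le k; rewrite ler_norml le_min => /andP[/andP[]].
split => [|k|a0_gt0].
- have ae_cvg : (fun k => a k + e k) @ \oo --> a0 by rewrite -[a0]addr0; apply: cvgD.
  by apply: cvgr_to_ge ae_cvg _; apply: nearW => k; have [+ _] := ab_ge k; lra.
- by have [] := ab_ge k.
apply: (norm_le_cvg0 _ e0); near=> k.
have : a0 / 2 < a k by near: k; apply: cvgr_gt a_cvg _ _; lra.
have : e k < a0 / 2 by near: k; apply: cvgr_lt e0 _ _; lra.
have := ler_norm (a k); have := ab_le k.
by case: (leP (a k) (b k)) => _; lra.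
Unshelve. all: by end_near.
Qed.

End Complementarity.

Section AugmentedLagrangianMethod.
Context {R : realType} {N n m p : nat}.
Context {blk : 'I_n -> 'I_N} {gblk : 'I_m -> 'I_N} {hblk : 'I_p -> 'I_N}.
Context {theta : 'I_N -> 'rV[R]_n -> R}.
Context {g : 'I_m -> 'rV[R]_n -> R} {h : 'I_p -> 'rV[R]_n -> R}.
Hypothesis Htheta : forall nu, C1 (theta nu).
Hypothesis Hg : forall i, C1 (g i).
Hypothesis Hh : forall i, C1 (h i).
Context {umax : 'I_m -> R} {tau gamma : 'I_N -> R}.
Hypothesis Humax : forall i, 0 <= umax i.
Hypothesis Htau : forall nu, 0 < tau nu < 1.
Hypothesis Hgamma : forall nu, 1 < gamma nu.
Context {x : nat -> 'rV[R]_n} {lam : nat -> 'I_m -> R} {mu : nat -> 'I_p -> R}.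
Context {u : nat -> 'I_m -> R} {rho : nat -> 'I_N -> R} {eps eps' : nat -> R}.
Hypothesis Hrho0 : forall nu, 0 < rho 0%N nu.
Hypothesis Heps_lim : eps @ \oo --> 0.
Hypothesis Heps'_lim : eps' @ \oo --> 0.
Hypothesis Hstep1 : forall k nu,
  bnorm (fun j => blk j == nu)
    (fun j => partial (fun y => La theta g gblk nu y (u k) (rho k nu)) j (x k.+1)
              + \sum_(i | hblk i == nu) partial (h i) j (x k.+1) * mu k.+1 i)
    <= eps k /\
  bnorm (fun i => hblk i == nu) (fun i => Num.min (- h i (x k.+1)) (mu k.+1 i)) <= eps' k.
Hypothesis Hstep2 : forall k i,
  lam k.+1 i = Num.max 0 (u k i + rho k (gblk i) * g i (x k.+1)).
Hypothesis Hstep3 : forall k nu,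
  rho k.+1 nu =
    if bnorm (fun i => gblk i == nu) (fun i => Num.min (- g i (x k.+1)) (lam k.+1 i))
       <= tau nu * bnorm (fun i => gblk i == nu) (fun i => Num.min (- g i (x k)) (lam k i))
    then rho k nu else gamma nu * rho k nu.
Hypothesis Hstep4 : forall k i, u k.+1 i = Num.min (lam k.+1 i) (umax i).

Let V nu k := bnorm (fun i => gblk i == nu) (fun i => Num.min (- g i (x k)) (lam k i)).
Let cmult k (i : 'I_m + 'I_p) := match i with inl i => lam k i | inr i => mu k i end.

Lemma rho_gt0 nu k : 0 < rho k nu.
Proof. exact: (penalty_gt0 (V := V nu) (Hgamma nu) (Hrho0 nu) (Hstep3^~ nu)). Qed.

Lemma lam_ge0 k i : 0 <= lam k.+1 i.
Proof. by rewrite Hstep2 le_max lexx. Qed.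

Lemma u_bounded k i : `|u k i| <= `|u 0%N i| + umax i.
Proof.
case: k => [|k]; first by rewrite lerDl.
rewrite Hstep4 ger0_norm; last by rewrite le_min lam_ge0 Humax.
by rewrite ge_min lerDr normr_ge0 orbT.
Qed.

Lemma kkt_residual_le k nu j : blk j = nu ->
  `|partial (theta nu) j (x k.+1) +
    \sum_(i | cblk gblk hblk i == nu) partial (cfun g h i) j (x k.+1) * cmult k.+1 i|
  <= eps k.
Proof.
move=> bj; have [+ _] := Hstep1 k nu; set v := (X in bnorm _ X <= _) => res_le.
rewrite [X in `|X| <= _](_ : _ = v j).
  by apply: le_trans (ler_norm_bnorm _ v j _) res_le; rewrite /= bj.
rewrite /v partial_La; [|exact: (Htheta nu).1|by move=> i; exact: (Hg i).1].
rewrite big_sumType /= addrA; congr (_ + _ + _); apply: eq_bigr => i /eqP gi.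
have rho_neq0 : rho k nu != 0 by rewrite gt_eqF ?rho_gt0.
congr (_ * _); rewrite /= Hstep2 gi maxr_pMr ?(ltW (rho_gt0 _ _)) // mulr0.
by rewrite mulrDr mulrCA divff // mulr1 addrC.
Qed.

Lemma h_compl_le k i : `|Num.min (- h i (x k.+1)) (mu k.+1 i)| <= eps' k.
Proof.
have [_] := Hstep1 k (hblk i); apply: le_trans.
exact: (ler_norm_bnorm (fun i' => hblk i' == hblk i)).
Qed.

Lemma g_compl_le k i : `|Num.min (- g i (x k)) (lam k i)| <= V (gblk i) k.
Proof. exact: (ler_norm_bnorm (fun i' => gblk i' == gblk i)). Qed.

Lemma penalty_cases nu : V nu @ \oo --> 0 \/ rho^~ nu @ \oo --> +oo.
Proof.
have /andP[tau_gt0 tau_lt1] := Htau nu.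
exact: (penalty_dichotomy tau_gt0 tau_lt1 (Hgamma nu) (Hrho0 nu) (fun k => sqrtr_ge0 _)
  (Hstep3^~ nu)).
Qed.

(* The limit point is approached by x^{(q k).+1}, the output of step q k. *)
Variable nu : 'I_N.
Context {q : nat -> nat} {xbar : 'rV[R]_n}.
Hypothesis q_ge : forall k, (k <= q k)%N.
Hypothesis xq_cvg : (fun k => x (q k).+1) @ \oo --> xbar.

Let y k := x (q k).+1.

Lemma cvg_along_q {f : 'rV[R]_n -> R} : differentiable f xbar ->
  (fun k => f (y k)) @ \oo --> f xbar.
Proof. by move=> df; apply: (continuous_cvg _ _ xq_cvg); exact: differentiable_continuous. Qed.

Lemma residual_cvg0 j : blk j = nu ->
  (fun k => partial (theta nu) j (y k) +
    \sum_(i | cblk gblk hblk i == nu) partial (cfun g h i) j (y k) * cmult (q k).+1 i)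
  @ \oo --> 0.
Proof.
move=> bj; apply: norm_le_cvg0 (cvg_subseq q_ge Heps_lim).
by apply: nearW => k; exact: kkt_residual_le.
Qed.

Lemma h_limits i : [/\ h i xbar <= 0, forall k, - eps' (q k) <= mu (q k).+1 i &
  h i xbar < 0 -> (fun k => mu (q k).+1 i) @ \oo --> 0].
Proof.
have [h_le0 mu_ge mu_cvg] := approx_compl_limit (cvgN (cvg_along_q ((Hh i).1 xbar)))
  (cvg_subseq q_ge Heps'_lim) (fun k => h_compl_le (q k) i).
split => // [|h_lt0]; first by rewrite -oppr_ge0.
by apply: mu_cvg; rewrite oppr_gt0.
Qed.

Lemma g_limits_of_V_cvg0 : V nu @ \oo --> 0 -> forall i, gblk i = nu ->
  g i xbar <= 0 /\ (g i xbar < 0 -> (fun k => lam (q k).+1 i) @ \oo --> 0).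
Proof.
move=> V0 i gi.
have Vq0 : (fun k => V nu (q k).+1) @ \oo --> 0.
  by apply: (cvg_subseq (f := fun k => (q k).+1)) V0 => k; exact: leqW.
have g_le k : `|Num.min (- g i (x k)) (lam k i)| <= V nu k by rewrite -gi; exact: g_compl_le.
have [g_le0 _ lam_cvg] := approx_compl_limit (cvgN (cvg_along_q ((Hg i).1 xbar))) Vq0
  (fun k => g_le (q k).+1).
split; first by rewrite -oppr_ge0.
by move=> g_lt0; apply: lam_cvg; rewrite oppr_gt0.
Qed.

Lemma lam_limits_of_rho_cvgy : rho^~ nu @ \oo --> +oo -> forall i, gblk i = nu ->
  (g i xbar < 0 -> (fun k => lam (q k).+1 i) @ \oo --> 0) /\
  (0 < g i xbar -> (fun k => lam (q k).+1 i) @ \oo --> +oo).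
Proof.
move=> rho_cvgy i gi; have /cvgryPge rhoq_ge := cvg_subseq q_ge rho_cvgy.
have g_cvg := cvg_along_q ((Hg i).1 xbar).
pose B := `|u 0%N i| + umax i.
have lam_eq k : lam (q k).+1 i = Num.max 0 (u (q k) i + rho (q k) nu * g i (y k)).
  by rewrite Hstep2 gi.
have u_le k : `|u (q k) i| <= B := u_bounded (q k) i.
split => [g_lt0|g_gt0].
  apply: (norm_le_cvg0 _ (cvg_cst 0)); near=> k.
  have gy_lt : g i (y k) < g i xbar / 2 by near: k; apply: cvgr_lt g_cvg _ _; lra.
  have rho_ge : 2 * (B + 1) / - g i xbar <= rho (q k) nu by near: k; exact: rhoq_ge.
  rewrite lam_eq max_l ?normr0 //.
  have : rho (q k) nu * g i (y k) <= 2 * (B + 1) / - g i xbar * (g i xbar / 2).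
    apply: le_trans (_ : rho (q k) nu * (g i xbar / 2) <= _).
      by rewrite ler_pM2l ?rho_gt0 // ltW.
    by rewrite ler_wnM2r //; lra.
  have -> : 2 * (B + 1) / - g i xbar * (g i xbar / 2) = - (B + 1).
    by field; rewrite ?oppr_eq0 (lt_eqF g_lt0).
  by have := ler_norm (u (q k) i); have := u_le k; lra.
apply/cvgryPge => A; near=> k.
have gy_gt : g i xbar / 2 < g i (y k) by near: k; apply: cvgr_gt g_cvg _ _; lra.
have rho_ge : (A + B) / (g i xbar / 2) <= rho (q k) nu by near: k; exact: rhoq_ge.
rewrite lam_eq le_max; apply/orP; right.
have : (A + B) / (g i xbar / 2) * (g i xbar / 2) <= rho (q k) nu * g i (y k).
  apply: le_trans (_ : rho (q k) nu * (g i xbar / 2) <= _).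
    by rewrite ler_pM2r //; lra.
  by rewrite ler_pM2l ?rho_gt0 // ltW.
rewrite divfK; last by rewrite gt_eqF //; lra.
by have := u_le k; rewrite ler_norml => /andP[+ _]; lra.
Unshelve. all: by end_near.
Qed.

Lemma lam_inactive_cvg0 i : gblk i = nu -> g i xbar < 0 ->
  (fun k => lam (q k).+1 i) @ \oo --> 0.
Proof.
move=> gi g_lt0; have [V0|rho_cvgy] := penalty_cases nu.
  by have [_] := g_limits_of_V_cvg0 V0 i gi; apply.
by have [+ _] := lam_limits_of_rho_cvgy rho_cvgy i gi; apply.
Qed.

Lemma lam_violated_cvgy i : gblk i = nu -> 0 < g i xbar ->
  (fun k => lam (q k).+1 i) @ \oo --> +oo.
Proof.
move=> gi g_gt0; have [V0|rho_cvgy] := penalty_cases nu.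
  by have [g_le0 _] := g_limits_of_V_cvg0 V0 i gi; move: g_gt0; rewrite ltNge g_le0.
by have [_] := lam_limits_of_rho_cvgy rho_cvgy i gi; apply.
Qed.

Lemma limit_point_block_kkt :
  (gnep_feasible g h xbar /\ gnep_cpld blk g gblk h hblk xbar) \/
    gnep_emfcq blk g gblk h hblk xbar ->
  block_kkt blk nu (cfun g h) (cblk gblk hblk) (fun j z => partial (theta nu) j z)
    (fun i j z => partial (cfun g h i) j z) xbar.
Proof.
move=> HCQ; pose w k := cmult (q k).+1.
have dth_cont j : {for xbar, continuous (partial (theta nu) j)} := (Htheta nu).2 j xbar.
have Dc_cont i j : {for xbar, continuous (partial (cfun g h i) j)}.
  by case: i => i; [exact: (Hg i).2 | exact: (Hh i).2].
have w_lower i : cblk gblk hblk i = nu ->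
    exists2 e : nat -> R, e @ \oo --> 0 & forall k, - e k <= w k i.
  case: i => i _ /=; first by exists (fun=> 0); [exact: cvg_cst | move=> k; rewrite oppr0 lam_ge0].
  by exists (fun k => eps' (q k)); [exact: cvg_subseq q_ge Heps'_lim | have [] := h_limits i].
have w_inactive i : cblk gblk hblk i = nu -> cfun g h i xbar < 0 ->
    (fun k => w k i) @ \oo --> 0.
  by case: i => i /= ci; [exact: lam_inactive_cvg0 | have [_ _] := h_limits i].
have feas i : cblk gblk hblk i = nu -> cfun g h i xbar <= 0.
  case: i => i /= ci; last by have [] := h_limits i.
  case: HCQ => [[[g_le0 _] _]|emfcq]; first exact: g_le0.
  rewrite leNgt; apply/negP => g_gt0; have [d Dd] := emfcq nu.
  exact: (emfcq_mult_not_cvgy _ _ _ _ _ _ _ dth_cont Dc_cont y w xq_cvg w_lower w_inactive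
    residual_cvg0 d (inl i) Dd ci (ltW g_gt0) (lam_violated_cvgy i ci g_gt0)).
apply: (approx_kkt_block_kkt _ _ _ _ _ _ _ dth_cont Dc_cont y w xq_cvg w_lower w_inactive
  residual_cvg0 feas).
by case: HCQ => [[_ cpld]|emfcq]; [exact: cpld | exact: emfcq_block_cpld (emfcq nu)].
Qed.

End AugmentedLagrangianMethod.

Theorem theorem4p6 (R : realType) (N n m p : nat)
  (blk : 'I_n -> 'I_N) (gblk : 'I_m -> 'I_N) (hblk : 'I_p -> 'I_N)
  (theta : 'I_N -> 'rV[R]_n -> R)
  (g : 'I_m -> 'rV[R]_n -> R) (h : 'I_p -> 'rV[R]_n -> R)
  (Htheta : forall nu, C1 (theta nu))
  (Hg : forall i, C1 (g i)) (Hh : forall i, C1 (h i))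
  (* algorithm parameters *)
  (umax : 'I_m -> R) (tau gamma : 'I_N -> R)
  (Humax : forall i, 0 <= umax i)
  (Htau : forall nu, 0 < tau nu < 1)
  (Hgamma : forall nu, 1 < gamma nu)
  (* iterates *)
  (x : nat -> 'rV[R]_n) (lam : nat -> 'I_m -> R) (mu : nat -> 'I_p -> R)
  (u : nat -> 'I_m -> R) (rho : nat -> 'I_N -> R)
  (eps eps' : nat -> R)
  (Hrho0 : forall nu, 0 < rho 0%N nu)
  (Heps_nonneg : forall k, 0 <= eps k)
  (Heps_decr : forall k, eps k.+1 <= eps k)
  (Heps_lim : eps @ \oo --> 0)
  (Heps'_lim : eps' @ \oo --> 0)
  (* step (1): inexactness assumption *)
  (Hstep1 : forall k nu,
     bnorm (fun j => blk j == nu)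
       (fun j => partial (fun y => La theta g gblk nu y (u k) (rho k nu)) j (x k.+1)
                 + \sum_(i | hblk i == nu) partial (h i) j (x k.+1) * mu k.+1 i)
       <= eps k /\
     bnorm (fun i => hblk i == nu)
       (fun i => Num.min (- h i (x k.+1)) (mu k.+1 i)) <= eps' k)
  (* step (2) *)
  (Hstep2 : forall k i,
     lam k.+1 i = Num.max 0 (u k i + rho k (gblk i) * g i (x k.+1)))
  (* step (3) *)
  (Hstep3 : forall k nu,
     rho k.+1 nu =
       if bnorm (fun i => gblk i == nu)
                (fun i => Num.min (- g i (x k.+1)) (lam k.+1 i))
          <= tau nu * bnorm (fun i => gblk i == nu)
                (fun i => Num.min (- g i (x k)) (lam k i))
       then rho k nu else gamma nu * rho k nu)
  (* step (4) *)
  (Hstep4 : forall k i, u k.+1 i = Num.min (lam k.+1 i) (umax i))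
  (* limit point *)
  (xbar : 'rV[R]_n)
  (Hlim : exists phi : nat -> nat, (forall k, (phi k < phi k.+1)%N) /\
            (fun k => x (phi k)) @ \oo --> xbar)
  (HCQ : (gnep_feasible g h xbar /\ gnep_cpld blk g gblk h hblk xbar)
         \/ gnep_emfcq blk g gblk h hblk xbar) :
  gnep_kkt blk theta g gblk h hblk xbar.
Proof.
move=> nu; have [phi [phi_step phi_cvg]] := Hlim.
pose q k := (phi k.+1).-1.
have qS k : (q k).+1 = phi k.+1 by rewrite prednK // (leq_ltn_trans _ (phi_step k)).
have q_ge k : (k <= q k)%N by rewrite -ltnS qS (ltn_step_ge phi_step k.+1).
have xq_cvg : (fun k => x (q k).+1) @ \oo --> xbar.
  by under eq_cvg do rewrite qS; exact: (cvg_subseq (f := S) leqnSn phi_cvg).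
exact: (limit_point_block_kkt Htheta Hg Hh Humax Htau Hgamma Hrho0 Heps_lim Heps'_lim
  Hstep1 Hstep2 Hstep3 Hstep4 nu q_ge xq_cvg HCQ).
Qed.
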